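(* Let $\mathbf{W}_0,\mathbf{W}^\star\in\mathbb{R}^{m\times n}$ with $\mathbf{W}^\star\neq\mathbf{W}_0$, let $r\ge1$, and let $L(\mathbf{W})=\frac12\|\mathbf{W}-\mathbf{W}^\star\|_F^2$ (which satisfies the PL inequality on $\mathbb{R}^{m\times n}$ with $\beta=1$). Then $F_{\mathrm{LoRA}}(\mathbf{A},\mathbf{B})=\frac12\|\mathbf{W}_0+\mathbf{A}\mathbf{B}-\mathbf{W}^\star\|_F^2$ does not satisfy the PL inequality on $\mathbb{R}^{m\times r}\times\mathbb{R}^{r\times n}$, i.e. there is no $\beta>0$ with $\frac12\|\nabla F_{\mathrm{LoRA}}(\mathbf{A},\mathbf{B})\|_F^2\ge\beta(F_{\mathrm{LoRA}}(\mathbf{A},\mathbf{B})-F^\star)$ for all $(\mathbf{A},\mathbf{B})$, where $F^\star=\inf F_{\mathrm{LoRA}}$. *)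

From HB Require Import structures.
From mathcomp Require Import all_boot all_order all_algebra.
From mathcomp Require Import all_classical all_reals all_analysis.
Set Implicit Arguments. Unset Strict Implicit. Unset Printing Implicit Defensive.
Import Order.TTheory GRing.Theory Num.Theory.
Local Open Scope ring_scope.
Local Open Scope classical_set_scope.

Definition frob2 (R : realType) (m n : nat) (M : 'M[R]_(m, n)) : R :=
  \sum_(i < m) \sum_(j < n) M i j ^+ 2.

Definition F_LoRA (R : realType) (m n r : nat) (W0 Wstar : 'M[R]_(m, n))
  (A : 'M[R]_(m, r)) (B : 'M[R]_(r, n)) : R :=
  2^-1 * frob2 (W0 + A *m B - Wstar).

Definition grad_norm2 (R : realType) (m n r : nat)
  (F : 'M[R]_(m, r) -> 'M[R]_(r, n) -> R)
  (A : 'M[R]_(m, r)) (B : 'M[R]_(r, n)) : R :=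
  \sum_(i < m) \sum_(k < r)
     (derive1 (fun t : R => F (A + t *: delta_mx i k) B) 0) ^+ 2
  + \sum_(k < r) \sum_(j < n)
     (derive1 (fun t : R => F A (B + t *: delta_mx k j)) 0) ^+ 2.

Definition inf_val (R : realType) (m n r : nat)
  (F : 'M[R]_(m, r) -> 'M[R]_(r, n) -> R) : R :=
  inf [set F A B | A in setT & B in setT].

Definition PL_pair (R : realType) (m n r : nat)
  (F : 'M[R]_(m, r) -> 'M[R]_(r, n) -> R) (beta : R) : Prop :=
  forall A B, 2^-1 * grad_norm2 F A B >= beta * (F A B - inf_val F).

From HB Require Import structures.
From mathcomp Require Import all_boot all_order all_algebra.
From mathcomp Require Import all_classical all_reals all_analysis.
From mathcomp Require Import ring.
Set Implicit Arguments. Unset Strict Implicit. Unset Printing Implicit Defensive.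
Import Order.TTheory GRing.Theory Num.Theory.
Local Open Scope ring_scope.

(* The origin (A, B) = (0, 0) is a stationary point of F_LoRA: moving A alone
   or B alone leaves the product A B = 0 unchanged.  It is not a global
   minimiser, because the rank-one product A B = c E_ij, with c the (i, j)
   entry of W* - W0, removes that entry from the residual and lowers the loss
   by c^2 / 2.  A PL inequality would force every stationary point to be a
   global minimiser. *)

Section Frobenius.

Variables (R : realType) (m n : nat).
Implicit Types M : 'M[R]_(m, n).

Lemma frob2_ge0 M : 0 <= frob2 M.
Proof. by apply: sumr_ge0 => i _; apply: sumr_ge0 => j _; exact: sqr_ge0. Qed.

Lemma frob2_add_delta M i j (c : R) :
  frob2 (M + c *: delta_mx i j) = frob2 M + (2 * M i j + c) * c.
Proof.
rewrite /frob2 !pair_bigA /= [LHS](bigD1 (i, j)) // [in RHS](bigD1 (i, j)) //=.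
rewrite !mxE !eqxx mulr1.
have -> : \sum_(p | p != (i, j)) (M + c *: delta_mx i j) p.1 p.2 ^+ 2
        = \sum_(p | p != (i, j)) M p.1 p.2 ^+ 2.
  apply: eq_bigr => -[a b] /=; rewrite xpair_eqE !mxE => /negbTE ->.
  by rewrite mulr0 addr0.
ring.
Qed.

End Frobenius.

Section PolyakLojasiewicz.

Variables (R : realType) (m n r : nat).
Variable F : 'M[R]_(m, r) -> 'M[R]_(r, n) -> R.

Lemma grad_norm2_eq0 A B :
  (forall A', F A' B = F A B) -> (forall B', F A B' = F A B) ->
  grad_norm2 F A B = 0.
Proof.
move=> FA FB; rewrite /grad_norm2 !big1 ?addr0 // => a _; rewrite big1 // => b _.
- have -> : (fun t : R => F A (B + t *: delta_mx a b)) = cst (F A B).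
    by apply/funext => t; rewrite FB.
  by rewrite derive1_cst expr0n.
- have -> : (fun t : R => F (A + t *: delta_mx a b) B) = cst (F A B).
    by apply/funext => t; rewrite FA.
  by rewrite derive1_cst expr0n.
Qed.

Lemma inf_val_le (lb : R) A B :
  (forall A' B', lb <= F A' B') -> inf_val F <= F A B.
Proof.
move=> Flb; apply: ge_inf; last by exists A => //; exists B.
by exists lb => _ [A' _ [B' _ <-]].
Qed.

Lemma PL_pair_stationary_min beta A B :
  0 < beta -> PL_pair F beta -> grad_norm2 F A B = 0 -> F A B <= inf_val F.
Proof.
move=> beta_gt0 PL grad0; have := PL A B.
by rewrite grad0 mulr0 pmulr_rle0 // subr_le0.
Qed.

End PolyakLojasiewicz.

Section LoRA.

Variables (R : realType) (m n r : nat) (W0 Wstar : 'M[R]_(m, n)).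

Lemma F_LoRA_ge0 A B : 0 <= @F_LoRA R m n r W0 Wstar A B.
Proof. by rewrite mulr_ge0 ?invr_ge0 ?ler0n ?frob2_ge0. Qed.

Lemma F_LoRA_rank_one (i : 'I_m) (k : 'I_r) (j : 'I_n) (c : R) :
  F_LoRA W0 Wstar (delta_mx i k) (c *: delta_mx k j)
  = F_LoRA W0 Wstar (0 : 'M[R]_(m, r)) 0
    + 2^-1 * (c - (Wstar - W0) i j) ^+ 2 - 2^-1 * (Wstar - W0) i j ^+ 2.
Proof.
rewrite /F_LoRA mulmx0 addr0 -scalemxAr mul_delta_mx addrAC frob2_add_delta.
by rewrite !mxE; ring.
Qed.

End LoRA.

Theorem proposition3 (R : realType) (m n r : nat) (W0 Wstar : 'M[R]_(m, n)) :
  Wstar != W0 -> (1 <= r)%N ->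
  ~ (exists beta : R, 0 < beta /\ PL_pair (@F_LoRA R m n r W0 Wstar) beta).
Proof.
move=> neW r_gt0 [beta [beta_gt0 PL]].
have /matrix0Pn [i [j Wij_neq0]] : Wstar - W0 != 0 by rewrite subr_eq0.
pose k : 'I_r := Ordinal r_gt0.
have grad0 : grad_norm2 (@F_LoRA R m n r W0 Wstar) 0 0 = 0.
  by apply: grad_norm2_eq0 => [A|B]; rewrite /F_LoRA ?mulmx0 ?mul0mx.
have := PL_pair_stationary_min beta_gt0 PL grad0; apply/negP; rewrite -ltNge.
pose c := (Wstar - W0) i j.
have inf_le := inf_val_le (delta_mx i k) (c *: delta_mx k j)
  (@F_LoRA_ge0 R m n r W0 Wstar).
apply: le_lt_trans inf_le _; rewrite F_LoRA_rank_one subrr expr0n mulr0 addr0.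
by rewrite gtrBl mulr_gt0 ?invr_gt0 ?ltr0n ?exprn_even_gt0.
Qed.
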